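(* Let $M\in\mathrm{M}_n(\mathbb{K})$ and suppose $\mathbb{K}^n=V_1\oplus\cdots\oplus V_t$ where each $V_i$ is a $\mathbb{K}$-subspace with $V_iM^t\subseteq V_i$. Let $d_i=\dim_{\mathbb{K}}V_i$ and let $P_i\in\mathrm{M}_{d_i\times n}(\mathbb{K})$ be a matrix whose rows form a $\mathbb{K}$-basis of $V_i$. Let $\mathcal{C}\subseteq\mathbb{L}^n$ be an $M$-code with parameters $[n,k]$, $k\ge1$, such that $\mathcal{C}=(\mathcal{C}\cap(V_1)_{\mathbb{L}})\oplus\cdots\oplus(\mathcal{C}\cap(V_t)_{\mathbb{L}})$. For each $i$ set $k_i=\dim_{\mathbb{L}}(\mathcal{C}\cap(V_i)_{\mathbb{L}})$ and $\mathcal{C}_i=\{c\in\mathbb{L}^{d_i} : cP_i\in\mathcal{C}\cap(V_i)_{\mathbb{L}}\}$, and let $\Lambda=\{i : \mathcal{C}\cap(V_i)_{\mathbb{L}}\neq\{0\}\}$. Then: (1) the map $u:(c_1,\dots,c_t)\in\mathbb{L}^{d_1}\times\cdots\times\mathbb{L}^{d_t}\mapsto\sum_i c_iP_i\in\mathbb{L}^n$ restricts to an $\mathbb{L}$-isomorphism $\mathcal{C}_1\times\cdots\times\mathcal{C}_t\to\mathcal{C}$, and $M_r(\mathcal{C}_1\times\cdots\times\mathcal{C}_t)=M_r(\mathcal{C})$ for all $r\in\{1,\dots,k\}$ (the product viewed as a code in $\mathbb{L}^n$ by concatenation); (2) for all $r\in\{1,\dots,k\}$, $$M_r(\mathcal{C})=\min_{\substack{\sum_{i\in\Lambda}r_i=r\\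 r_i\in\{0,\dots,k_i\}}}\ \sum_{i\in\Lambda}M_{r_i}(\mathcal{C}_i)=\min_{\substack{\sum_{i\in\Lambda}r_i=r\\ r_i\in\{0,\dots,k_i\}}}\ \sum_{i\in\Lambda}M_{r_i}(\mathcal{C}\cap(V_i)_{\mathbb{L}});$$ (3) for all $i\in\Lambda$ and $r_i\in\{1,\dots,k_i\}$, $M_{r_i}(\mathcal{C}_i)\le d_i-k_i+r_i$; (4) for all $r\in\{1,\dots,k\}$, $$M_r(\mathcal{C})\le\min_{\substack{\sum_{i\in\Lambda}r_i=r\\ r_i\in\{0,\dots,k_i\}}}\Big(\sum_{i\in\Lambda,\ r_i\neq0}(d_i-k_i)\Big)+r.$$
   Context: Let $\mathbb{L}/\mathbb{K}$ be a field extension of finite degree $m$, and $n\ge 1$ an integer with $m\ge n$ (standing assumption). Vectors are row vectors. Fix a $\mathbb{K}$-basis $\mathcal{B}$ of $\mathbb{L}$; for $c=(c_1,\dots,c_n)\in\mathbb{L}^n$ let $M_{\mathcal{B}}(c)\in\mathrm{M}_{m\times n}(\mathbb{K})$ be the matrix whose $j$-th column is the coordinate vector of $c_j$ in $\mathcal{B}$. The rank support $\mathrm{Rsupp}(c)\subseteq\mathbb{K}^n$ is the $\mathbb{K}$-row space of $M_{\mathcal{B}}(c)$, and $\mathrm{wt}_R(c)=\dim_{\mathbb{K}}\mathrm{Rsupp}(c)$. For an $\mathbb{L}$-subspace $\mathcal{D}\subseteq\mathbb{L}^n$, $\mathrm{Rsupp}(\mathcal{D})$ is the $\mathbb{K}$-span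 of all $\mathrm{Rsupp}(d)$, $d\in\mathcal{D}$, and $\mathrm{wt}_R(\mathcal{D})=\dim_{\mathbb{K}}\mathrm{Rsupp}(\mathcal{D})$. A linear $[n,k]$ code is a $k$-dimensional $\mathbb{L}$-subspace $\mathcal{C}\subseteq\mathbb{L}^n$; for $1\le r\le k$, $M_r(\mathcal{C})=\min\{\mathrm{wt}_R(\mathcal{D}) : \mathcal{D}\subseteq\mathcal{C},\ \dim_{\mathbb{L}}\mathcal{D}=r\}$ (the $r$-th generalized rank weight), and $M_0(\mathcal{C})=0$ by convention. For $M\in\mathrm{M}_n(\mathbb{K})$, a linear code $\mathcal{C}\subseteq\mathbb{L}^n$ is an $M$-code if $cM^t\in\mathcal{C}$ for all $c\in\mathcal{C}$. For a $\mathbb{K}$-subspace $V\subseteq\mathbb{K}^n$, $V_{\mathbb{L}}$ denotes the $\mathbb{L}$-subspace of $\mathbb{L}^n$ spanned by $V$. *)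

From HB Require Import structures.
From mathcomp Require Import all_boot all_order all_algebra all_field.
From mathcomp Require Import boolp.
Set Implicit Arguments. Unset Strict Implicit. Unset Printing Implicit Defensive.
Import GRing.Theory.
Local Open Scope ring_scope.

(* Infimum of a set of natural numbers (0 if the set is empty). *)
Lemma natmin_subproof (P : nat -> Prop) :
  (exists n, P n) -> exists n, `[< P n >].
Proof. by case=> n hn; exists n; apply/asboolP. Qed.

Definition natmin (P : nat -> Prop) : nat :=
  match pselect (exists n, P n) with
  | left h => ex_minn (natmin_subproof h)
  | right _ => 0%N
  end.

Section RankMetric.
Variables (K : fieldType) (L : fieldExtType K).
(* B : a K-basis of L (m = \dim {:L} = [L:K]). *)
Variable B : (\dim {:L}).-tuple L.

(* M_B(c): m x n matrix over K whose j-th column is the coordinate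
   vector of c_j in the basis B. Its K-row space is Rsupp(c). *)
Definition Bmx n (c : 'rV[L]_n) : 'M[K]_(\dim {:L}, n) :=
  \matrix_(i, j) coord B i (c 0 j).

Definition wtR n (c : 'rV[L]_n) : nat := \rank (Bmx c).

(* wt_R(D) for the L-subspace D of L^n given as the row space of a
   matrix D: the dimension of the K-span of all Rsupp(d), d in D, i.e.
   of the smallest K-subspace of K^n containing every Rsupp(d). *)
Definition wtRsp n p (D : 'M[L]_(p, n)) : nat :=
  natmin (fun w => exists V : 'M[K]_n,
            \rank V = w /\ forall d : 'rV[L]_n, (d <= D)%MS -> (Bmx d <= V)%MS).

(* For r = 0 this is 0 (D = 0), matching the convention M_0 = 0. *)
Definition GRW n p (C : 'M[L]_(p, n)) (r : nat) : nat :=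
  natmin (fun w => exists D : 'M[L]_n,
            [/\ (D <= C)%MS, \rank D = r & wtRsp D = w]).

End RankMetric.

Definition toL (K : fieldType) (L : fieldExtType K) m n (A : 'M[K]_(m, n))
  : 'M[L]_(m, n) := map_mx (in_alg L) A.

(* wt_R(D) is the dimension of the smallest K-subspace V of K^n with D <= V_L.
   Since K^n = V_1 (+) ... (+) V_t, the projection onto V_i along the other
   summands is K-rational: applying it to an r-dimensional subcode D of C,
   and recursing on its kernel, splits D into subcodes D_i of C cap (V_i)_L
   with sum of dimensions r and sum of rank weights at most wt_R(D).
   Conversely, the sum of r_i-dimensional subcodes of the summands is direct
   with rank weight at most the sum of theirs.
   The rows of the P_i together form a K-basis of K^n, so c |-> c P_i (and the
   block version) preserves dimensions and rank weights, which gives (1) and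
   transports (2) to the C_i. (3) is the Singleton-type bound: a coordinate
   subspace of dimension d_i - k_i + r meets C_i in dimension at least r;
   (4) combines (2) and (3). *)

From HB Require Import structures.
From mathcomp Require Import all_boot all_order all_algebra all_field.
From mathcomp Require Import boolp zify.
Set Implicit Arguments. Unset Strict Implicit. Unset Printing Implicit Defensive.
Import GRing.Theory.
Local Open Scope ring_scope.

Lemma natminP (P : nat -> Prop) : (exists n, P n) ->
  P (natmin P) /\ forall m, P m -> (natmin P <= m)%N.
Proof.
move=> exP; rewrite /natmin; case: pselect => // {}exP.
case: ex_minnP => m /asboolP Pm m_min; split=> // k Pk.
exact/m_min/asboolP.
Qed.

Lemma natmin_le (P : nat -> Prop) m : P m -> (natmin P <= m)%N.
Proof. by move=> Pm; apply: (natminP (ex_intro _ m Pm)).2. Qed.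

Lemma natmin_eq (P : nat -> Prop) m :
  P m -> (forall w, P w -> (m <= w)%N) -> natmin P = m.
Proof.
move=> Pm m_min; have [Pmin _] := natminP (ex_intro _ m Pm).
by apply/eqP; rewrite eqn_leq natmin_le // m_min.
Qed.

Lemma natmin_ext (P Q : nat -> Prop) :
  (forall w, P w <-> Q w) -> natmin P = natmin Q.
Proof. by move=> PQ; have -> : P = Q by apply: funext => w; apply: propext. Qed.

Lemma exists_submx_rank (F : fieldType) m n (X : 'M[F]_(m, n)) r :
  (r <= \rank X)%N -> exists D : 'M[F]_n, (D <= X)%MS /\ \rank D = r.
Proof.
move=> leqrX; exists (pid_mx r *m row_base X); split.
  by rewrite (submx_trans (submxMl _ _)) ?eq_row_base.
rewrite mxrankMfree ?row_base_free // rank_pid_mx //.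
exact: leq_trans leqrX (rank_leq_col X).
Qed.

Lemma mxdirect_sum_eq (F : fieldType) (I : finType) n (A : I -> 'M[F]_n)
    (u v : I -> 'rV[F]_n) :
  mxdirect (\sum_i A i) -> (forall i, u i <= A i)%MS -> (forall i, v i <= A i)%MS ->
  \sum_i u i = \sum_i v i -> forall i, u i = v i.
Proof.
move/mxdirect_sumsP=> dxA uA vA /eqP; rewrite -subr_eq0 -sumrB => /eqP sum0 j.
have uvA i : (u i - v i <= A i)%MS by rewrite addmx_sub ?eqmx_opp.
apply/eqP; rewrite -subr_eq0 -submx0 -(dxA j isT) sub_capmx uvA /=.
move: sum0; rewrite (bigD1 j) //= => /eqP; rewrite addr_eq0 => /eqP ->.
by rewrite eqmx_opp summx_sub // => i ij; rewrite (sumsmx_sup i).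
Qed.

Lemma mxdirect_sumsS (F : fieldType) (I : finType) n (P : pred I)
    (A D : I -> 'M[F]_n) :
  mxdirect (\sum_i A i) -> (forall i, P i -> D i <= A i)%MS ->
  mxdirect (\sum_(i | P i) D i).
Proof.
move/mxdirect_sumsP=> dxA DA; apply/mxdirect_sumsP=> i Pi.
apply/eqP; rewrite -submx0 -[X in (_ <= X)%MS](dxA i isT) capmxS ?DA //.
by apply/sumsmx_subP=> j /andP[Pj ji]; rewrite (sumsmx_sup j) ?DA.
Qed.

Lemma row_free_mxcol (F : fieldType) t (d : 'I_t -> nat) n
    (P : forall i, 'M[F]_(d i, n)) :
  (forall i, row_free (P i)) -> mxdirect (\sum_i <<P i>>)%MS ->
  row_free (\mxcol_i P i).
Proof.
move=> freeP dxP; rewrite /row_free eqmx_col (mxdirectP dxP) /=.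
by apply/eqP/eq_bigr=> i _; rewrite genmxE; apply/eqP/freeP.
Qed.

Lemma mulmx_preimage_eqmx (F : fieldType) m d n (Q : 'M[F]_(d, n))
    (A : 'M[F]_(m, n)) (Cc : 'M[F]_d) :
  (A <= Q)%MS -> (forall c : 'rV_d, (c <= Cc)%MS = (c *m Q <= A)%MS) ->
  (Cc *m Q :=: A)%MS.
Proof.
move=> AQ CcE; apply/eqmxP/andP; split.
  by apply/row_subP=> j; rewrite row_mul -CcE row_sub.
apply/row_subP=> j; have /submxP[c Aj] := submx_trans (row_sub j A) AQ.
by rewrite Aj submxMr // CcE -Aj row_sub.
Qed.

Section RankWeight.
Variables (K : fieldType) (L : fieldExtType K) (B : (\dim {:L}).-tuple L).
Hypothesis basisB : basis_of fullv B.

Lemma toLM m n p (A : 'M[K]_(m, n)) (C : 'M[K]_(n, p)) :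
  toL L (A *m C) = toL L A *m toL L C.
Proof. exact: map_mxM. Qed.

Lemma toL_submx m1 m2 n (A : 'M[K]_(m1, n)) (C : 'M[K]_(m2, n)) :
  (toL L A <= toL L C)%MS = (A <= C)%MS.
Proof. exact: map_submx. Qed.

Lemma mxrank_toL m n (A : 'M[K]_(m, n)) : \rank (toL L A) = \rank A.
Proof. exact: mxrank_map. Qed.

Lemma row_free_toL m n (A : 'M[K]_(m, n)) : row_free (toL L A) = row_free A.
Proof. exact: row_free_map. Qed.

Lemma Bmx_mulmx_toL n p (w : 'rV[L]_p) (V : 'M[K]_(p, n)) :
  Bmx B (w *m toL L V) = Bmx B w *m V.
Proof.
apply/matrixP=> i j; rewrite !mxE linear_sum.
by apply: eq_bigr=> l _; rewrite !mxE mulr_algr linearZ mulrC.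
Qed.

Lemma Bmx_expand n (x : 'rV[L]_n) :
  x = \sum_(i < \dim {:L}) B`_i *: toL L (row i (Bmx B x)).
Proof.
apply/rowP=> j; rewrite summxE.
have xjB : x 0 j \in span B by move/andP: basisB => [/eqP-> _]; apply: memvf.
by rewrite {1}(coord_span xjB); apply: eq_bigr=> i _; rewrite !mxE mulr_algr.
Qed.

Lemma Bmx_subP n s (D : 'M[L]_(s, n)) (V : 'M[K]_n) :
  (forall d : 'rV_n, (d <= D)%MS -> (Bmx B d <= V)%MS) <-> (D <= toL L V)%MS.
Proof.
split=> [BmxDV | DV d dD].
  apply/row_subP=> i; rewrite (Bmx_expand (row i D)).
  apply: summx_sub=> l _; apply: scalemx_sub; rewrite toL_submx.
  exact: submx_trans (row_sub _ _) (BmxDV _ (row_sub i D)).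
by have /submxP[w ->] := submx_trans dD DV; rewrite Bmx_mulmx_toL submxMl.
Qed.

Lemma wtRsp_spec n s (D : 'M[L]_(s, n)) :
  exists V : 'M[K]_n, \rank V = wtRsp B D /\ (D <= toL L V)%MS.
Proof.
have exV : exists w, exists V : 'M[K]_n,
    \rank V = w /\ forall d : 'rV_n, (d <= D)%MS -> (Bmx B d <= V)%MS.
  by exists n, 1%:M; rewrite mxrank1; split=> // d _; apply: submx1.
by have [[V [rV /Bmx_subP DV]] _] := natminP exV; exists V.
Qed.

Lemma wtRsp_min n s q (D : 'M[L]_(s, n)) (V : 'M[K]_(q, n)) :
  (D <= toL L V)%MS -> (wtRsp B D <= \rank V)%N.
Proof.
move=> DV; rewrite -genmxE; apply: natmin_le; exists <<V>>%MS; split=> //.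
by apply/Bmx_subP; rewrite (submx_trans DV) // toL_submx genmxE.
Qed.

Lemma wtRspS n s1 s2 (D1 : 'M[L]_(s1, n)) (D2 : 'M[L]_(s2, n)) :
  (D1 <= D2)%MS -> (wtRsp B D1 <= wtRsp B D2)%N.
Proof.
by move=> D12; have [V [<- D2V]] := wtRsp_spec D2; apply/wtRsp_min/submx_trans/D2V.
Qed.

Lemma wtRsp_eqmx n s1 s2 (D1 : 'M[L]_(s1, n)) (D2 : 'M[L]_(s2, n)) :
  (D1 :=: D2)%MS -> wtRsp B D1 = wtRsp B D2.
Proof. by move=> eqD; apply/eqP; rewrite eqn_leq !wtRspS ?eqD. Qed.

Lemma wtRsp0 n s : wtRsp B (0 : 'M[L]_(s, n)) = 0%N.
Proof. by apply/eqP; rewrite -leqn0 -(mxrank0 K n n) wtRsp_min ?sub0mx. Qed.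

Lemma wtRsp_mul_free n s p (D : 'M[L]_(s, p)) (Q : 'M[K]_(p, n)) :
  row_free Q -> wtRsp B (D *m toL L Q) = wtRsp B D.
Proof.
move=> /row_freeP[R QR]; apply/eqP; rewrite eqn_leq; apply/andP; split.
  have [V [<- DV]] := wtRsp_spec D.
  by apply: leq_trans (mxrankM_maxl V Q); rewrite wtRsp_min // toLM submxMr.
have [V [<- DQV]] := wtRsp_spec (D *m toL L Q).
apply: leq_trans (mxrankM_maxl V R); apply: wtRsp_min.
have -> : D = D *m toL L Q *m toL L R.
  by rewrite -mulmxA -toLM QR /toL map_mx1 mulmx1.
by rewrite toLM submxMr.
Qed.

Lemma wtRsp_sum_le n (I : finType) (P : pred I) (D : I -> 'M[L]_n) :
  (wtRsp B (\sum_(i | P i) D i)%MS <= \sum_(i | P i) wtRsp B (D i))%N.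
Proof.
have [V DV] := fin_all_exists (fun i => wtRsp_spec (D i)).
apply: leq_trans (_ : \rank (\sum_(i | P i) V i)%MS <= _)%N.
  apply: wtRsp_min; apply/sumsmx_subP=> i Pi; case: (DV i) => _ /submx_trans->//.
  by rewrite toL_submx (sumsmx_sup i).
apply: leq_trans (mxrank_sum_leqif _).1 _ => /=.
by apply: leq_sum=> i _; case: (DV i) => ->.
Qed.

Lemma GRW_le n p (C : 'M[L]_(p, n)) (D : 'M[L]_n) :
  (D <= C)%MS -> (GRW B C (\rank D) <= wtRsp B D)%N.
Proof. by move=> DC; apply: natmin_le; exists D. Qed.

Lemma GRW_spec n p (C : 'M[L]_(p, n)) r : (r <= \rank C)%N ->
  exists D : 'M[L]_n, [/\ (D <= C)%MS, \rank D = r & wtRsp B D = GRW B C r].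
Proof.
move=> /exists_submx_rank[D0 [D0C rD0]].
have exD : exists w, exists D : 'M[L]_n,
    [/\ (D <= C)%MS, \rank D = r & wtRsp B D = w] by exists (wtRsp B D0), D0.
by have [[D DP] _] := natminP exD; exists D.
Qed.

Lemma GRW0 n p (C : 'M[L]_(p, n)) : GRW B C 0 = 0%N.
Proof.
by apply/eqP; rewrite -leqn0; have := GRW_le (sub0mx n C); rewrite mxrank0 wtRsp0.
Qed.

Lemma GRW_eqmx n p1 p2 (C1 : 'M[L]_(p1, n)) (C2 : 'M[L]_(p2, n)) r :
  (C1 :=: C2)%MS -> GRW B C1 r = GRW B C2 r.
Proof.
by move=> eqC; apply: natmin_ext=> w; split=> -[D]; exists D; rewrite ?eqC // -eqC.
Qed.

Lemma GRW_mul_free n p q (C : 'M[L]_(p, q)) (Q : 'M[K]_(q, n)) r :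
  row_free Q -> GRW B (C *m toL L Q) r = GRW B C r.
Proof.
move=> freeQ; have freeQL : row_free (toL L Q) by rewrite row_free_toL.
apply: natmin_ext=> w; split=> -[D [DC <- <-]].
  have /submxP[u ->] := DC; exists <<u *m C>>%MS.
  by rewrite !genmxE submxMl mulmxA (mxrankMfree _ freeQL)
             (wtRsp_eqmx (genmxE _)) wtRsp_mul_free.
exists <<D *m toL L Q>>%MS.
by rewrite !genmxE submxMr // (mxrankMfree _ freeQL) (wtRsp_eqmx (genmxE _))
           wtRsp_mul_free.
Qed.

Lemma GRW_mxdiag t (d : 'I_t -> nat) n (P : forall i, 'M[K]_(d i, n))
    (Cc : forall i, 'M[L]_(d i)) r :
  (forall i, row_free (P i)) -> mxdirect (\sum_i <<P i>>)%MS ->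
  GRW B (\mxdiag_i Cc i) r = GRW B (\sum_i <<Cc i *m toL L (P i)>>)%MS r.
Proof.
move=> freeP dxP; rewrite -(GRW_mul_free _ r (row_free_mxcol freeP dxP)).
have -> : toL L (\mxcol_i P i) = \mxcol_i toL L (P i).
  by apply/matrixP=> a b; rewrite !mxE.
by rewrite mul_mxdiag_mxcol; apply/GRW_eqmx/eqmx_col.
Qed.

Lemma GRW_singleton d p (Cc : 'M[L]_(p, d)) r : (r <= \rank Cc)%N ->
  (GRW B Cc r <= d - \rank Cc + r)%N.
Proof.
move=> leqrC; have leCd := rank_leq_col Cc.
set V : 'M[K]_d := pid_mx (d - \rank Cc + r).
have rV : \rank V = (d - \rank Cc + r)%N by rewrite rank_pid_mx //; lia.
have leq_r_cap : (r <= \rank (Cc :&: toL L V))%N.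
  have := mxrank_sum_cap Cc (toL L V); rewrite mxrank_toL rV.
  have := rank_leq_col (Cc + toL L V)%MS; lia.
have [D [Dcap rD]] := exists_submx_rank leq_r_cap.
rewrite -{1}rD; apply: leq_trans (GRW_le (submx_trans Dcap (capmxSl _ _))) _.
by rewrite -rV wtRsp_min // (submx_trans Dcap) ?capmxSr.
Qed.

(* D1 and D2 are the image of D and its kernel part under the K-rational
   projection onto X1 along X2. *)
Lemma wtRsp_proj_split n (X1 X2 : 'M[K]_n) (A1 A2 D : 'M[L]_n) :
  (X1 :&: X2 = 0)%MS -> (A1 <= toL L X1)%MS -> (A2 <= toL L X2)%MS ->
  (D <= A1 + A2)%MS ->
  exists D1 D2 : 'M[L]_n, [/\ (D1 <= A1)%MS, (D2 <= A2)%MS,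
    (\rank D1 + \rank D2)%N = \rank D & (wtRsp B D1 + wtRsp B D2 <= wtRsp B D)%N].
Proof.
move=> dxX A1X A2X DA; set E := proj_mx X1 X2.
have A1E : A1 *m toL L E = A1.
  by have /submxP[u ->] := A1X; rewrite -mulmxA -toLM proj_mx_id.
have A2E : A2 *m toL L E = 0.
  have /submxP[u ->] := A2X.
  by rewrite -mulmxA -toLM proj_mx_0 // /toL map_mx0 mulmx0.
have projE (Y : 'M[L]_n) : (Y <= A1 + A2)%MS ->
    exists2 u, Y *m toL L E = u *m A1 & (Y - Y *m toL L E <= A2)%MS.
  case/sub_addsmxP=> -[u1 u2] /= ->; exists u1.
    by rewrite mulmxDl -!mulmxA A1E A2E mulmx0 addr0.
  by rewrite mulmxDl -!mulmxA A1E A2E mulmx0 addr0 addrAC subrr add0r submxMl.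
set D2 := (D :&: kermx (toL L E))%MS.
have D2A2 : (D2 <= A2)%MS.
  have [_ _] := projE D2 (submx_trans (capmxSl _ _) DA).
  have /eqP-> : D2 *m toL L E == 0 by rewrite -sub_kermx capmxSr.
  by rewrite subr0.
exists (D *m toL L E), D2; split=> //.
- by have [u -> _] := projE D DA; apply: submxMl.
- exact: mxrank_mul_ker.
have [V [<- DV]] := wtRsp_spec D.
rewrite -(mxrank_mul_ker V E); apply: leq_add.
  by rewrite wtRsp_min // toLM submxMr.
apply: leq_trans (_ : wtRsp B D2 <= \rank (V :&: X2))%N _.
  rewrite wtRsp_min // (map_capmx (in_alg L) V X2) sub_capmx.
  by rewrite (submx_trans (capmxSl _ _) DV) (submx_trans D2A2 A2X).
by rewrite mxrankS // capmxS // sub_kermx proj_mx_0.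
Qed.

Section DirectSum.
Variables (I : finType) (n : nat) (A : I -> 'M[L]_n).

Lemma GRW_sum_le p (C : 'M[L]_(p, n)) (S : {set I}) (rho : I -> nat) :
  mxdirect (\sum_i A i) -> (forall i, A i <= C)%MS ->
  (forall i, i \in S -> rho i <= \rank (A i))%N ->
  (GRW B C (\sum_(i in S) rho i) <= \sum_(i in S) GRW B (A i) (rho i))%N.
Proof.
move=> dxA AC rhoA.
have exD i : exists D : 'M[L]_n, i \in S ->
    [/\ (D <= A i)%MS, \rank D = rho i & wtRsp B D = GRW B (A i) (rho i)].
  case: (boolP (i \in S)) => iS; last by exists 0.
  by have [D DP] := GRW_spec (rhoA i iS); exists D.
have [D DP] := fin_all_exists exD.
have dxD : mxdirect (\sum_(i in S) D i).
  by apply: mxdirect_sumsS dxA _ => i /DP[].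
have <- : \rank (\sum_(i in S) D i)%MS = (\sum_(i in S) rho i)%N.
  by rewrite (mxdirectP dxD); apply: eq_bigr=> i /DP[].
apply: leq_trans (GRW_le _) _.
  by apply/sumsmx_subP=> i /DP[DA _ _]; apply: submx_trans DA (AC i).
apply: leq_trans (wtRsp_sum_le _ _) _.
by apply: leq_sum=> i /DP[_ _ ->].
Qed.

Variable X : I -> 'M[K]_n.
Hypothesis dxX : mxdirect (\sum_i X i).
Hypothesis AX : forall i, (A i <= toL L (X i))%MS.

Lemma sum_GRW_le_wtRsp (S : {set I}) (D : 'M[L]_n) :
  (D <= \sum_(i in S) A i)%MS ->
  exists rho : I -> nat, [/\ forall i, (rho i <= \rank (A i))%N,
    (\sum_(i in S) rho i)%N = \rank D &
    (\sum_(i in S) GRW B (A i) (rho i) <= wtRsp B D)%N].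
Proof.
move: {2}#|S| (erefl #|S|) => N; elim: N S D => [|N IH] S D cardS DA.
  move: DA; rewrite (cards0_eq cardS) big_set0 submx0 => /eqP->.
  by exists (fun=> 0%N); split; rewrite ?big_set0 ?mxrank0.
have [j Sj] : exists j, j \in S by apply/card_gt0P; rewrite cardS.
set S' := S :\ j.
have cardS' : #|S'| = N by move: cardS; rewrite (cardsD1 j S) Sj add1n => -[].
have dxXj : (X j :&: \sum_(i in S') X i = 0)%MS.
  move/mxdirect_sumsP: dxX => /(_ j isT) Xj0.
  apply/eqP; rewrite -submx0 -[X in (_ <= X)%MS]Xj0 capmxS //.
  by apply/sumsmx_subP=> i /setD1P[ij _]; rewrite (sumsmx_sup i) // eq_sym ij.
have A'X : (\sum_(i in S') A i <= toL L (\sum_(i in S') X i)%MS)%MS.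
  apply/sumsmx_subP=> i iS'; apply: submx_trans (AX i) _.
  by rewrite toL_submx (sumsmx_sup i).
rewrite (big_setD1 j Sj) /= in DA.
have [D1 [D2 [D1A D2A rD wD]]] := wtRsp_proj_split dxXj (AX j) A'X DA.
have [rho [rhoA rhoS rhoW]] := IH S' D2 cardS' D2A.
have sumS' (F : I -> nat) (Fj : nat) :
    (\sum_(i in S) (if i == j then Fj else F i) = Fj + \sum_(i in S') F i)%N.
  rewrite (big_setD1 j Sj) eqxx; congr (_ + _)%N.
  by apply: eq_bigr=> i /setD1P[/negbTE-> _].
exists (fun i => if i == j then \rank D1 else rho i); split.
- by move=> i; case: eqP=> [->|_]; [apply: mxrankS | apply: rhoA].
- by rewrite sumS' rhoS.
rewrite (eq_bigr (fun i => if i == j then GRW B (A j) (\rank D1)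
                           else GRW B (A i) (rho i))); last first.
  by move=> i _; case: eqP=> [->|].
by rewrite sumS' (leq_trans _ wD) // leq_add ?GRW_le.
Qed.

Lemma GRW_direct_sum p (C : 'M[L]_(p, n)) (S : {set I}) r :
  mxdirect (\sum_i A i) -> (forall i, A i <= C)%MS ->
  (C <= \sum_(i in S) A i)%MS -> (r <= \rank C)%N ->
  GRW B C r = natmin (fun w => exists rho : I -> nat,
    [/\ forall i, i \in S -> (rho i <= \rank (A i))%N,
        (\sum_(i in S) rho i)%N = r
      & (\sum_(i in S) GRW B (A i) (rho i))%N = w]).
Proof.
move=> dxA AC CA leq_rC; symmetry; apply: natmin_eq=> [|w [rho [rhoA <- <-]]].
  have [D [DC rD wD]] := GRW_spec leq_rC.
  have [rho [rhoA rhoS rhoW]] := sum_GRW_le_wtRsp (submx_trans DC CA).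
  have rhor : (\sum_(i in S) rho i)%N = r by rewrite rhoS.
  exists rho; split=> //; apply/eqP; rewrite eqn_leq -wD rhoW wD.
  by rewrite -{1}rhor GRW_sum_le.
exact: GRW_sum_le.
Qed.

End DirectSum.

Section DecomposedCode.
Variables (n t : nat) (d : 'I_t -> nat) (P : forall i : 'I_t, 'M[K]_(d i, n)).
Hypothesis freeP : forall i, row_free (P i).
Hypothesis dxP : mxdirect (\sum_i <<P i>>)%MS.
Variables (C : 'M[L]_n) (Ci : forall i : 'I_t, 'M[L]_(d i)).
Local Notation Cp i := (C :&: toL L (P i))%MS.
Local Notation Lam := [set i | \rank (Cp i) != 0%N].
Hypothesis C_sum : (C :=: \sum_i Cp i)%MS.
Hypothesis dxC : mxdirect (\sum_i Cp i).
Hypothesis CiE : forall i (c : 'rV[L]_(d i)),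
  (c <= Ci i)%MS = (c *m toL L (P i) <= Cp i)%MS.

Lemma row_free_toL_P i : row_free (toL L (P i)).
Proof. by rewrite row_free_toL. Qed.

Lemma Ci_mul_eqmx i : (Ci i *m toL L (P i) :=: Cp i)%MS.
Proof. by apply: mulmx_preimage_eqmx; [apply: capmxSr | apply: CiE]. Qed.

Lemma mxrank_Ci i : \rank (Ci i) = \rank (Cp i).
Proof. by rewrite -(mxrankMfree _ (row_free_toL_P i)) Ci_mul_eqmx. Qed.

Lemma GRW_Ci i r : GRW B (Ci i) r = GRW B (Cp i) r.
Proof. by rewrite -(GRW_mul_free _ r (freeP i)) (GRW_eqmx r (Ci_mul_eqmx i)). Qed.

Lemma Cp_sub_toL i : (Cp i <= toL L <<P i>>)%MS.
Proof. by rewrite (submx_trans (capmxSr _ _)) // toL_submx genmxE. Qed.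

Lemma C_sub_sum_Lam : (C <= \sum_(i in Lam) Cp i)%MS.
Proof.
rewrite {1}C_sum; apply/sumsmx_subP=> i _; have [iLam|] := boolP (i \in Lam).
  by rewrite (sumsmx_sup i).
by rewrite inE negbK mxrank_eq0 => /eqP->; apply: sub0mx.
Qed.

Lemma sum_mulmx_Ci_sub (c : forall i, 'rV[L]_(d i)) :
  (forall i, c i <= Ci i)%MS -> ((\sum_i c i *m toL L (P i))%R <= C)%MS.
Proof.
move=> cC; apply: summx_sub=> i _.
by move: (cC i); rewrite CiE=> /submx_trans->//; apply: capmxSl.
Qed.

Lemma sum_mulmx_Ci_inj (c c' : forall i, 'rV[L]_(d i)) :
  (forall i, c i <= Ci i)%MS -> (forall i, c' i <= Ci i)%MS ->
  \sum_i c i *m toL L (P i) = \sum_i c' i *m toL L (P i) -> forall i, c i = c' i.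
Proof.
move=> cC c'C sum_cc' i; apply: (row_free_inj (row_free_toL_P i)).
by apply: (mxdirect_sum_eq dxC _ _ sum_cc') => j; rewrite -CiE.
Qed.

Lemma sum_mulmx_Ci_onto (y : 'rV[L]_n) : (y <= C)%MS ->
  exists c : forall i, 'rV[L]_(d i),
    (forall i, c i <= Ci i)%MS /\ \sum_i c i *m toL L (P i) = y.
Proof.
rewrite {1}C_sum => /sub_sumsmxP[u ->].
have exc i : exists2 c : 'rV_(d i), (c <= Ci i)%MS & c *m toL L (P i) = u i *m Cp i.
  have /submxP[w uCp] : (u i *m Cp i <= Ci i *m toL L (P i))%MS.
    by rewrite Ci_mul_eqmx submxMl.
  by exists (w *m Ci i); rewrite ?submxMl // uCp mulmxA.
have [c cC cCp] := fin_all_exists2 exc.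
by exists c; split=> //; apply: eq_bigr=> i _.
Qed.

Lemma GRW_mxdiag_Ci r : GRW B (\mxdiag_i Ci i) r = GRW B C r.
Proof.
rewrite (GRW_mxdiag Ci r freeP dxP); apply: GRW_eqmx.
apply: eqmx_trans (eqmx_sym C_sum); apply: eqmx_sums=> i _.
exact: eqmx_trans (genmxE _) (Ci_mul_eqmx i).
Qed.

Lemma GRW_decomposed_Cp r : (r <= \rank C)%N ->
  GRW B C r = natmin (fun w => exists rho : 'I_t -> nat,
    [/\ forall i, i \in Lam -> (rho i <= \rank (Cp i))%N,
        (\sum_(i in Lam) rho i)%N = r
      & (\sum_(i in Lam) GRW B (Cp i) (rho i))%N = w]).
Proof.
apply: (GRW_direct_sum dxP Cp_sub_toL dxC _ C_sub_sum_Lam).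
by move=> i; apply: capmxSl.
Qed.

Lemma GRW_decomposed_Ci r : (r <= \rank C)%N ->
  GRW B C r = natmin (fun w => exists rho : 'I_t -> nat,
    [/\ forall i, i \in Lam -> (rho i <= \rank (Cp i))%N,
        (\sum_(i in Lam) rho i)%N = r
      & (\sum_(i in Lam) GRW B (Ci i) (rho i))%N = w]).
Proof.
move=> /GRW_decomposed_Cp->; apply: natmin_ext=> w.
by split=> -[rho [? ? <-]]; exists rho; split=> //; apply: eq_bigr=> i _;
  rewrite GRW_Ci.
Qed.

Lemma GRW_Ci_singleton i r : (r <= \rank (Cp i))%N ->
  (GRW B (Ci i) r <= d i - \rank (Cp i) + r)%N.
Proof. by rewrite -mxrank_Ci; apply: GRW_singleton. Qed.

Lemma GRW_decomposed_le r : (r <= \rank C)%N ->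
  (GRW B C r <= natmin (fun w => exists rho : 'I_t -> nat,
    [/\ forall i, i \in Lam -> (rho i <= \rank (Cp i))%N,
        (\sum_(i in Lam) rho i)%N = r
      & (\sum_(i in Lam | rho i != 0%N) (d i - \rank (Cp i)))%N = w]) + r)%N.
Proof.
move=> lerC; have [D [DC rD _]] := GRW_spec lerC.
have [rho0 [rho0C rho0r _]] :=
  sum_GRW_le_wtRsp dxP Cp_sub_toL (submx_trans DC C_sub_sum_Lam).
have exrho : exists w, exists rho : 'I_t -> nat,
    [/\ forall i, i \in Lam -> (rho i <= \rank (Cp i))%N,
        (\sum_(i in Lam) rho i)%N = r
      & (\sum_(i in Lam | rho i != 0%N) (d i - \rank (Cp i)))%N = w].
  by do 2!eexists; split=> [i _||]; [apply: rho0C | rewrite rho0r |].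
have [[rho [rhoC rhor <-]] _] := natminP exrho.
have : (GRW B C r <= \sum_(i in Lam) GRW B (Ci i) (rho i))%N.
  by rewrite GRW_decomposed_Ci //; apply: natmin_le; exists rho.
move/leq_trans; apply; rewrite -rhor big_mkcondr -big_split.
apply: leq_sum=> i iLam; have [->|rho_ne0] := eqVneq (rho i) 0%N.
  by rewrite GRW0.
by rewrite GRW_Ci_singleton ?rhoC.
Qed.

End DecomposedCode.

End RankWeight.
Theorem theorem3 (K : fieldType) (L : fieldExtType K)
  (B : (\dim {:L}).-tuple L) (HB : basis_of fullv B)
  (n : nat) (Hmn : (n <= \dim {:L})%N)
  (M : 'M[K]_n)
  (t : nat) (d : 'I_t -> nat) (P : forall i : 'I_t, 'M[K]_(d i, n))
  (* rows of P i form a K-basis of V_i *)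
  (HPfree : forall i, row_free (P i))
  (* K^n = V_1 (+) ... (+) V_t *)
  (HVsum : ((\sum_i <<P i>>)%MS :=: 1%:M)%MS)
  (HVdirect : mxdirect (\sum_i <<P i>>)%MS)
  (* V_i M^t \subseteq V_i *)
  (HVinv : forall i, (P i *m M^T <= P i)%MS)
  (C : 'M[L]_n) (k : nat)
  (* C is an M-code *)
  (HMcode : forall c : 'rV[L]_n, (c <= C)%MS -> (c *m (toL L M)^T <= C)%MS)
  (* parameters [n,k], k >= 1 *)
  (HCdim : \rank C = k) (Hk : (1 <= k)%N)
  (* C = (C \cap (V_1)_L) (+) ... (+) (C \cap (V_t)_L) *)
  (HCsum : (C :=: \sum_i (C :&: toL L (P i)))%MS)
  (HCdirect : mxdirect (\sum_i (C :&: toL L (P i)))%MS)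
  (* C_i = { c in L^{d_i} : c P_i \in C \cap (V_i)_L } *)
  (Ci : forall i : 'I_t, 'M[L]_(d i))
  (HCi : forall i (c : 'rV[L]_(d i)),
      (c <= Ci i)%MS = (c *m toL L (P i) <= C :&: toL L (P i))%MS) :
  let ki i := \rank (C :&: toL L (P i))%MS in
  let Lam := [set i : 'I_t | ki i != 0%N] in
  (* (1) *)
  [/\ ((forall c : forall i : 'I_t, 'rV[L]_(d i),
          (forall i, (c i <= Ci i)%MS) ->
          ((\sum_i c i *m toL L (P i))%R <= C)%MS)
       /\ (forall c c' : forall i : 'I_t, 'rV[L]_(d i),
          (forall i, (c i <= Ci i)%MS) -> (forall i, (c' i <= Ci i)%MS) ->
          \sum_i c i *m toL L (P i) = \sum_i c' i *m toL L (P i) ->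
          forall i, c i = c' i)
       /\ (forall y : 'rV[L]_n, (y <= C)%MS ->
          exists c : forall i : 'I_t, 'rV[L]_(d i),
            (forall i, (c i <= Ci i)%MS) /\ \sum_i c i *m toL L (P i) = y)
       /\ (forall r, (1 <= r <= k)%N ->
          GRW B (\mxdiag_(i < t) Ci i) r = GRW B C r)),
   (* (2) *)
   (forall r, (1 <= r <= k)%N ->
      GRW B C r = natmin (fun w => exists rho : 'I_t -> nat,
          [/\ forall i, i \in Lam -> (rho i <= ki i)%N,
              (\sum_(i in Lam) rho i)%N = r
            & (\sum_(i in Lam) GRW B (Ci i) (rho i))%N = w])
      /\
      GRW B C r = natmin (fun w => exists rho : 'I_t -> nat,
          [/\ forall i, i \in Lam -> (rho i <= ki i)%N,
              (\sum_(i in Lam) rho i)%N = r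
            & (\sum_(i in Lam) GRW B (C :&: toL L (P i))%MS (rho i))%N = w])),
   (* (3) *)
   (forall i, i \in Lam -> forall ri, (1 <= ri <= ki i)%N ->
      (GRW B (Ci i) ri <= d i - ki i + ri)%N)
 & (* (4) *)
   (forall r, (1 <= r <= k)%N ->
      (GRW B C r <= natmin (fun w => exists rho : 'I_t -> nat,
          [/\ forall i, i \in Lam -> (rho i <= ki i)%N,
              (\sum_(i in Lam) rho i)%N = r
            & (\sum_(i in Lam | rho i != 0%N) (d i - ki i))%N = w]) + r)%N)].
Proof.
move=> ki Lam; have lekC r : (1 <= r <= k)%N -> (r <= \rank C)%N.
  by case/andP=> _; rewrite HCdim.
split.
- split; first exact (sum_mulmx_Ci_sub HCi).
  split; first exact (sum_mulmx_Ci_inj HPfree HCdirect HCi).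
  split; first exact (sum_mulmx_Ci_onto HCsum HCi).
  move=> r _; exact (GRW_mxdiag_Ci HB HPfree HVdirect HCsum HCi r).
- move=> r /lekC lerC; split.
    exact (GRW_decomposed_Ci HB HPfree HVdirect HCsum HCdirect HCi lerC).
  exact (GRW_decomposed_Cp HB HVdirect HCsum HCdirect lerC).
- move=> i _ ri /andP[_ leri]; exact (GRW_Ci_singleton HB HPfree HCi leri).
move=> r /lekC lerC.
exact (GRW_decomposed_le HB HPfree HVdirect HCsum HCdirect HCi lerC).
Qed.
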